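(* Let $N\ge 1$, let $A\in\{0,1\}^{N\times N}$ be the symmetric adjacency matrix of an undirected graph (the top layer) and let $L\in\mathbb{R}^{N\times N}$ be the (symmetric) Laplacian matrix of an undirected graph (the bottom layer) on the node set $[N]=\{1,\dots,N\}$. Let $K=\mathrm{diag}(\kappa_1,\dots,\kappa_N)$ with each $\kappa_i\in\{0,1\}$. Let $\mathcal{G}_{\mathfrak{T}}$ be the group of $N\times N$ permutation matrices $P$ with $PA=AP$, let $\mathcal{G}_{\mathfrak{B}}$ be the group of $N\times N$ permutation matrices $P$ with $PL=LP$, and let $$\mathcal{G}=\Big\{\begin{pmatrix}P_{\mathfrak{T}}&0\\0&P_{\mathfrak{B}}\end{pmatrix}: P_{\mathfrak{T}}\in\mathcal{G}_{\mathfrak{T}},\ P_{\mathfrak{B}}\in\mathcal{G}_{\mathfrak{B}},\ P_{\mathfrak{B}}K=KP_{\mathfrak{T}}\Big\}.$$ Let $\{\mathcal{K}_{\mathfrak{T}}^j\}_{j=1}^{k_{\mathfrak{T}}}$ and $\{\mathcal{K}_{\mathfrak{B}}^l\}_{l=1}^{k_{\mathfrak{B}}}$ be the partitions of $[N]$ into orbits of $\mathcal{G}$ acting (through the $P_{\mathfrak{T}}$ block, respectively the $P_{\mathfrak{B}}$ block) on $[N]$. Let $E_{\mathfrak{T}}\in\mathbb{R}^{N\times k_{\mathfrak{T}}}$ be the matrix with $(E_{\mathfrak{T}})_{ij}=1$ if $i\in\mathcal{K}_{\mathfrak{T}}^j$ and $0$ otherwise, and similarly $E_{\mathfrak{B}}\in\mathbb{R}^{N\times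 k_{\mathfrak{B}}}$; let $\Pi_{\mathfrak{T}}=E_{\mathfrak{T}}(E_{\mathfrak{T}}^*E_{\mathfrak{T}})^{-1}E_{\mathfrak{T}}^*$ and $\Pi_{\mathfrak{B}}=E_{\mathfrak{B}}(E_{\mathfrak{B}}^*E_{\mathfrak{B}})^{-1}E_{\mathfrak{B}}^*$ be the orthogonal projections onto the column spaces of $E_{\mathfrak{T}}$ and $E_{\mathfrak{B}}$. Let $\{v_{\mathfrak{T}}^i\}_{i\in[N]}$ and $\{v_{\mathfrak{B}}^i\}_{i\in[N]}$ be orthonormal eigenbases of $\Pi_{\mathfrak{T}}$ and $\Pi_{\mathfrak{B}}$, ordered so that $v_{\mathfrak{T}}^1,\dots,v_{\mathfrak{T}}^{k_{\mathfrak{T}}}$ span the column space of $E_{\mathfrak{T}}$ and $v_{\mathfrak{B}}^1,\dots,v_{\mathfrak{B}}^{k_{\mathfrak{B}}}$ span the column space of $E_{\mathfrak{B}}$ (the remaining vectors spanning the respective kernels), and set $T_{\mathfrak{T}}=[v_{\mathfrak{T}}^1,\dots,v_{\mathfrak{T}}^N]$, $T_{\mathfrak{B}}=[v_{\mathfrak{B}}^1,\dots,v_{\mathfrak{B}}^N]$. Then $B=T_{\mathfrak{T}}^*AT_{\mathfrak{T}}$ and $M=T_{\mathfrak{B}}^*LT_{\mathfrak{B}}$ are block-diagonal, $$B=\begin{pmatrix}B^{\parallel}&0\\0&B^{\perp}\end{pmatrix},\qquad M=\begin{pmatrix}M^{\parallel}&0\\0&M^{\perp}\end{pmatrix},$$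 with $B^{\parallel}\in\mathbb{R}^{k_{\mathfrak{T}}\times k_{\mathfrak{T}}}$, $B^{\perp}\in\mathbb{R}^{(N-k_{\mathfrak{T}})\times(N-k_{\mathfrak{T}})}$, $M^{\parallel}\in\mathbb{R}^{k_{\mathfrak{B}}\times k_{\mathfrak{B}}}$, $M^{\perp}\in\mathbb{R}^{(N-k_{\mathfrak{B}})\times(N-k_{\mathfrak{B}})}$.
   Context: This concerns a duplex network of two layers on the same node set $[N]$: a top layer with adjacency matrix $A$ and a bottom layer with Laplacian $L$, with directed one-to-one inter-layer links from top node $i$ to bottom node $i$ present exactly when $\kappa_i=1$. The sets $\mathcal{K}_{\mathfrak{T}}^j$, $\mathcal{K}_{\mathfrak{B}}^l$ are called the clusters of the top and bottom layer. $E^*$ denotes the transpose. *)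

From HB Require Import structures.
From mathcomp Require Import all_boot all_order all_algebra all_fingroup.
Set Implicit Arguments. Unset Strict Implicit. Unset Printing Implicit Defensive.
Import Order.TTheory GRing.Theory Num.Theory.
Local Open Scope ring_scope.

Section Duplex.
Variables (R : realFieldType) (N : nat).

Definition is_adjacency (W : 'M[R]_N) : Prop :=
  W^T = W /\ forall i j, W i j = 0 \/ W i j = 1.

Definition laplacian (W : 'M[R]_N) : 'M[R]_N :=
  diag_mx (\row_i (\sum_k W i k)) - W.

Definition coupling (kappa : 'I_N -> bool) : 'M[R]_N :=
  diag_mx (\row_i (kappa i)%:R).

(* the symmetry group G, as the set of pairs (s_T, s_B) with
   P_T = perm_mx s_T, P_B = perm_mx s_B *)
Definition symgroup (A L K : 'M[R]_N) : {set 'S_N * 'S_N} :=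
  [set p : 'S_N * 'S_N |
     [&& perm_mx p.1 *m A == A *m perm_mx p.1,
         perm_mx p.2 *m L == L *m perm_mx p.2 &
         perm_mx p.2 *m K == K *m perm_mx p.1]].

Definition orbitT (A L K : 'M[R]_N) (i : 'I_N) : {set 'I_N} :=
  [set fun_of_perm p.1 i | p in symgroup A L K].
Definition orbitB (A L K : 'M[R]_N) (i : 'I_N) : {set 'I_N} :=
  [set fun_of_perm p.2 i | p in symgroup A L K].

Definition clustersT A L K : {set {set 'I_N}} := [set orbitT A L K i | i : 'I_N].
Definition clustersB A L K : {set {set 'I_N}} := [set orbitB A L K i | i : 'I_N].

Definition indicator (P : {set {set 'I_N}}) : 'M[R]_(N, #|P|) :=
  \matrix_(i < N, j < #|P|) ((i \in enum_val (A := mem P) j) : bool)%:R.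

Definition proj_of (k : nat) (E : 'M[R]_(N, k)) : 'M[R]_N :=
  E *m invmx (E^T *m E) *m E^T.

(* T has orthonormal columns, each an eigenvector of Pi, and its first k
   columns span the column space of E *)
Definition adapted_basis (k : nat) (E : 'M[R]_(N, k)) (T : 'M[R]_N) : Prop :=
  [/\ T^T *m T = 1%:M,
      (forall j : 'I_N, exists lam : R,
          proj_of E *m col j T = lam *: col j T) &
      ((\matrix_(j < N, i < N) (if (j < k)%N then T i j else 0)) :=: E^T)%MS].

Definition block_diag (k : nat) (M : 'M[R]_N) : Prop :=
  forall i j : 'I_N, (i < k)%N != (j < k)%N -> M i j = 0.

End Duplex.

From HB Require Import structures.
From mathcomp Require Import all_boot all_order all_algebra all_fingroup.
Set Implicit Arguments. Unset Strict Implicit. Unset Printing Implicit Defensive.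
Import Order.TTheory GRing.Theory Num.Theory.
Local Open Scope ring_scope.

(* Let H be a permutation group whose permutation matrices commute with a
   symmetric X.  The indicator of an H-orbit is H-invariant, hence so is its
   image under X; an H-invariant vector is constant on orbits, i.e. a linear
   combination of orbit indicators.  So the cluster space spanned by the
   columns of E is X-invariant and, X being symmetric, so is its orthogonal
   complement: in an orthonormal basis whose first k vectors span the cluster
   space, X is block diagonal.  This applies to A with the top projection of
   the symmetry group and to L with the bottom one. *)

Section BlockDiagonal.
Variables (R : fieldType) (N k : nat) (X T : 'M[R]_N).
Hypotheses (symX : X^T = X) (orthoT : T^T *m T = 1%:M).

Let D : 'M[R]_N := diag_mx (\row_j (j < k)%N%:R).
Let Tk := \matrix_(j < N, i < N) (if (j < k)%N then T i j else 0).

Lemma leading_columns_mul : Tk *m T = D.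
Proof.
have -> : Tk = D *m T^T.
  apply/matrixP => j i; rewrite mul_diag_mx !mxE.
  by case: (j < k)%N; rewrite (mul1r, mul0r).
by rewrite -mulmxA orthoT mulmx1.
Qed.

Hypothesis invTk : (Tk *m X <= Tk)%MS.

Lemma conj_upper_right_block_eq0 (i j : 'I_N) :
  (i < k)%N -> ~~ (j < k)%N -> (T^T *m X *m T) i j = 0.
Proof.
move=> ik jk; have [W defTkX] := submxP invTk.
have rowTk : row i Tk = row i T^T by apply/rowP => c; rewrite !mxE ik.
have -> : (T^T *m X *m T) i j = (Tk *m X *m T) i j.
  have rowE (M : 'M[R]_N) : row i M 0 j = M i j by rewrite mxE.
  by rewrite -!rowE !row_mul rowTk.
rewrite defTkX -mulmxA leading_columns_mul mul_mx_diag !mxE.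
by rewrite (negbTE jk) mulr0.
Qed.

Lemma conj_off_diagonal_block_eq0 (i j : 'I_N) :
  (i < k)%N != (j < k)%N -> (T^T *m X *m T) i j = 0.
Proof.
case: (boolP (i < k)%N) => ik; case: (boolP (j < k)%N) => jk //= _.
  exact: conj_upper_right_block_eq0.
have symXT : (T^T *m X *m T)^T = T^T *m X *m T.
  by rewrite !trmx_mul trmxK symX mulmxA.
by rewrite -symXT mxE conj_upper_right_block_eq0.
Qed.

End BlockDiagonal.

Section OrbitIndicator.
Variables (R : realFieldType) (N : nat) (H : {group 'S_N}).
Let P := [set orbit 'P H i | i : 'I_N].
Let E := @indicator R N P.

Lemma perm_fixed_row_const (v : 'rV[R]_N) :
  {in H, forall s, v *m perm_mx s = v} ->
  {in H, forall (s : 'S_N) j, v 0 (s j) = v 0 j}.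
Proof.
by move=> vH s sH j; rewrite -[in RHS](vH s^-1%g) ?groupV // -col_permE mxE.
Qed.

Lemma orbit_indicator_perm_invariant c :
  {in H, forall s, row c E^T *m perm_mx s = row c E^T}.
Proof.
move=> s sH; apply/rowP => j; rewrite -[s]invgK -col_permE !mxE.
have [x _ ->] := imsetP (enum_valP c).
by rewrite -[(s^-1)%g j]apermE orbit_actr ?groupV.
Qed.

Lemma perm_invariant_sub_orbit_indicator (v : 'rV[R]_N) :
  {in H, forall s, v *m perm_mx s = v} -> (v <= E^T)%MS.
Proof.
move=> /perm_fixed_row_const vH.
(* Coefficient of the c-th orbit: the value of v at any of its points. *)
pose a c := if [pick x in enum_val (A := mem P) c] is Some x then v 0 x else 0.
suff -> : v = \sum_c a c *: row c E^T.
  by apply: summx_sub => c _; apply: scalemx_sub; apply: row_sub.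
apply/rowP => j; rewrite summxE.
have Pj : orbit 'P H j \in P by apply: imset_f.
rewrite (bigD1 (enum_rank_in Pj (orbit 'P H j))) //= big1 => [|c].
  rewrite !mxE enum_rankK_in // orbit_refl mulr1 addr0 /a enum_rankK_in //.
  case: pickP => [x /orbitP [s sH <-]|/(_ j)]; first by rewrite /= apermE vH.
  by rewrite orbit_refl.
rewrite !mxE; have [x _ Pc] := imsetP (enum_valP c).
case: (boolP (j \in enum_val c)) => [jc|]; last by rewrite mulr0.
case/eqP; apply: enum_val_inj; rewrite enum_rankK_in // Pc.
by apply/orbit_eqP; rewrite orbit_sym -Pc.
Qed.

Variable X : 'M[R]_N.
Hypothesis commX : {in H, forall s, perm_mx s *m X = X *m perm_mx s}.

Lemma orbit_indicator_invariant : (E^T *m X <= E^T)%MS.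
Proof.
apply/row_subP => c; rewrite row_mul.
apply: perm_invariant_sub_orbit_indicator => s sH.
by rewrite -mulmxA -commX // mulmxA orbit_indicator_perm_invariant.
Qed.

End OrbitIndicator.

Section SymmetryGroup.
Variables (R : realFieldType) (N : nat) (A L K : 'M[R]_N).

Lemma group_set_symgroup : group_set (symgroup A L K).
Proof.
apply/group_setP; split; first by rewrite inE perm_mx1 !mul1mx !mulmx1 !eqxx.
move=> p q; rewrite !inE /=.
move=> /and3P[/eqP pA /eqP pL /eqP pK] /and3P[/eqP qA /eqP qL /eqP qK].
by rewrite !perm_mxM -!mulmxA qA qL qK !mulmxA pA pL pK !eqxx.
Qed.

Canonical symgroup_group := Group group_set_symgroup.

Lemma orbitT_perm i : orbitT A L K i = orbit 'P (fst @* symgroup A L K)%g i.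
Proof. by rewrite morphimE setTI /orbit -imset_comp. Qed.

Lemma orbitB_perm i : orbitB A L K i = orbit 'P (snd @* symgroup A L K)%g i.
Proof. by rewrite morphimE setTI /orbit -imset_comp. Qed.

Lemma symgroup_fst_commute :
  {in (fst @* symgroup A L K)%g, forall s, perm_mx s *m A = A *m perm_mx s}.
Proof. by move=> _ /morphimP[p _ + ->]; rewrite inE => /and3P[/eqP]. Qed.

Lemma symgroup_snd_commute :
  {in (snd @* symgroup A L K)%g, forall s, perm_mx s *m L = L *m perm_mx s}.
Proof. by move=> _ /morphimP[p _ + ->]; rewrite inE => /and3P[_ /eqP]. Qed.

End SymmetryGroup.

Lemma tr_laplacian (R : realFieldType) (N : nat) (W : 'M[R]_N) :
  W^T = W -> (laplacian W)^T = laplacian W.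
Proof. by move=> symW; rewrite /laplacian linearB /= tr_diag_mx symW. Qed.

Lemma block_diag_adapted (R : realFieldType) (N k : nat) (E : 'M[R]_(N, k))
    (X T : 'M[R]_N) :
  X^T = X -> (E^T *m X <= E^T)%MS -> adapted_basis E T ->
  block_diag k (T^T *m X *m T).
Proof.
move=> symX invE [orthoT _ TkE] i j; apply: conj_off_diagonal_block_eq0 => //.
by rewrite (eqmxMr X TkE) TkE.
Qed.

Theorem proposition2 (R : realFieldType) (N : nat) (A W L : 'M[R]_N)
    (kappa : 'I_N -> bool) (TT TB : 'M[R]_N) :
  (0 < N)%N ->
  is_adjacency A ->
  is_adjacency W -> L = laplacian W ->
  let K := @coupling R N kappa in
  let ET := @indicator R N (clustersT A L K) in
  let EB := @indicator R N (clustersB A L K) in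
  adapted_basis ET TT ->
  adapted_basis EB TB ->
  block_diag #|clustersT A L K| (TT^T *m A *m TT) /\
  block_diag #|clustersB A L K| (TB^T *m L *m TB).
Proof.
move=> _ [symA _] [symW _] defL K ET EB adaptedT adaptedB; split.
- apply: block_diag_adapted symA _ adaptedT.
  rewrite /ET /clustersT (eq_imset _ (orbitT_perm A L K)).
  exact/orbit_indicator_invariant/symgroup_fst_commute.
- have symL : L^T = L by rewrite defL tr_laplacian.
  apply: block_diag_adapted symL _ adaptedB.
  rewrite /EB /clustersB (eq_imset _ (orbitB_perm A L K)).
  exact/orbit_indicator_invariant/symgroup_snd_commute.
Qed.
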